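(* Let $\mathcal{M}$ be a separable metric space, $f:\mathcal{M}\to\mathcal{M}$ continuous, and $\mathcal{X}\subseteq\mathcal{M}$ forward invariant under $f$ and path connected, with $\mathcal{W}$ the set of $\omega$-limit sets of $x_{k+1}=f(x_k)$ on $\mathcal{X}$. Suppose every trajectory on $\mathcal{X}$ is forward precompact in $\mathcal{X}$ and $\mathcal{W}$ is countable. If $\mathcal{W}$ has more than one element, then there do not exist a separable metric space $\mathcal{Z}$, a continuous $g:\mathcal{Z}\to\mathcal{Z}$ such that $z_{k+1}=g(z_k)$ has closed basins, and a continuous one-to-one map $F:\mathcal{X}\to\mathcal{Z}$ with $F\circ f=g\circ F$ on $\mathcal{X}$.
   Context: Forward orbit of $\xi$: $\{f^k(\xi)\mid k\in\mathbb{N}\}$; forward precompact in $\mathcal{X}$ means its closure in $\mathcal{X}$ is compact. $\omega_{\mathcal{X}}(\xi)$ is the set of $x\in\mathcal{X}$ with $f^{k_j}(\xi)\to x$ for some $k_j\to\infty$; $\mathcal{W}=\{\omega_{\mathcal{X}}(\xi)\mid\xi\in\mathcal{X}\}$. For $g$ on $\mathcal{Z}$, $\omega$-limit sets are defined analogously; domain of attraction $D^+_{\mathcal{Z}}(\Omega)=\{\zeta\in\mathcal{Z}\mid\omega_{\mathcal{Z}}(\zeta)=\Omega\}$; closed basins means every such domain of attraction is closed. *)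

From HB Require Import structures.
From mathcomp Require Import all_boot all_order all_algebra.
From mathcomp Require Import all_classical all_reals all_analysis.
Set Implicit Arguments. Unset Strict Implicit. Unset Printing Implicit Defensive.
Import Order.TTheory GRing.Theory Num.Theory.
Local Open Scope classical_set_scope.
Local Open Scope ring_scope.

Definition separable (T : topologicalType) : Prop :=
  exists2 D : set T, countable D & dense D.

Definition path_connected_set (R : realType) (T : topologicalType) (X : set T) : Prop :=
  forall x y, X x -> X y ->
    exists p : R -> T,
      [/\ {within `[0, 1], continuous p}, p 0 = x, p 1 = y & p @` `[0, 1] `<=` X].

Definition forward_invariant (T : Type) (f : T -> T) (X : set T) : Prop :=
  f @` X `<=` X.

Definition forward_orbit (T : Type) (f : T -> T) (xi : T) : set T :=
  [set iter k f xi | k in [set: nat]].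

(* Forward precompact in X: the closure in X (relative closure, i.e.
   closure of the orbit intersected with X) is compact. *)
Definition forward_precompact_in (T : topologicalType) (f : T -> T) (X : set T) (xi : T) : Prop :=
  compact (closure (forward_orbit f xi) `&` X).

Definition omega_limit (T : topologicalType) (f : T -> T) (X : set T) (xi : T) : set T :=
  [set x | X x /\ exists k : nat -> nat,
      (forall N : nat, \forall j \near \oo, (N <= k j)%N) /\
      (fun j => iter (k j) f xi) @ \oo --> x].

Definition omega_limit_sets (T : topologicalType) (f : T -> T) (X : set T) : set (set T) :=
  [set omega_limit f X xi | xi in X].

Definition domain_of_attraction (T : topologicalType) (g : T -> T) (Omega : set T) : set T :=
  [set z | omega_limit g setT z = Omega].

Definition closed_basins (T : topologicalType) (g : T -> T) : Prop :=
  forall zeta : T, closed (domain_of_attraction g (omega_limit g setT zeta)).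

From HB Require Import structures.
From mathcomp Require Import all_boot all_order all_algebra.
From mathcomp Require Import all_classical all_reals all_analysis.
From mathcomp Require Import lra.
Set Implicit Arguments. Unset Strict Implicit. Unset Printing Implicit Defensive.
Import Order.TTheory GRing.Theory Num.Theory.
Import numFieldNormedType.Exports.
Local Open Scope classical_set_scope.
Local Open Scope ring_scope.

(* Along a path p : [0, 1] -> X from x1 to x2, t |-> omega(p t) colours [0, 1] with
   countably many colours.  Precompactness of orbits and the conjugacy give
   omega_Z(F xi) = F (omega(xi)), so by injectivity of F two points of X have the same
   omega-limit set iff their images lie in the same basin of g.  Basins are closed and
   F \o p is continuous, hence every colour class is closed in [0, 1].  By Sierpinski's
   theorem [0, 1] is not a countable disjoint union of two or more nonempty closed sets,
   so omega(x1) = omega(x2). *)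

Lemma closed_sup_mem (R : realType) (A : set R) :
  A !=set0 -> closed A -> has_ubound A -> A (sup A).
Proof.
by move=> A0 cA ubA; rewrite [X in X (sup A)](@closure_id R A).1 //; exact: closure_sup.
Qed.

Lemma closed_inf_mem (R : realType) (A : set R) :
  A !=set0 -> closed A -> has_lbound A -> A (inf A).
Proof.
move=> [a Aa] cA [l lA]; rewrite /inf.
have [x Ax <-] : [set - x | x in A] (sup [set - x | x in A]).
  apply: closed_sup_mem; [by exists (- a), a | exact: closedN |].
  by exists (- l) => _ [x Ax <-]; rewrite lerN2; exact: lA.
by rewrite opprK.
Qed.

Lemma nested_itv_common_point (R : realType) (l r : nat -> R) :
  (forall n, l n <= l n.+1) -> (forall n, r n.+1 <= r n) -> (forall n, l n <= r n) ->
  exists y, forall n, l n <= y <= r n.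
Proof.
move=> /nondecreasing_seqP l_incr /nonincreasing_seqP r_decr lr.
have lr_all m n : l m <= r n.
  apply: le_trans (l_incr _ _ (leq_maxl m n)) _.
  exact: le_trans (lr _) (r_decr _ _ (leq_maxr m n)).
have l_ne0 : range l !=set0 by exists (l 0%N), 0%N.
exists (sup (range l)) => n; apply/andP; split.
  by apply: sup_upper_bound; [split=> //; exists (r 0%N) => _ [m _ <-] | exists n].
by apply: ge_sup => // _ [m _ <-].
Qed.

Section closed_colouring.
Variables (R : realType) (lo hi : R) (c : R -> nat).
Hypothesis closed_colour_class : forall n, closed [set t | lo <= t <= hi /\ c t = n].

Let closed_colour_class_within n a b :
  closed ([set t | lo <= t <= hi /\ c t = n] `&` [set t | a <= t <= b]).
Proof. by apply: closedI => //; exact: (@itv_closed _ R a b). Qed.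

Lemma colour_gap a b : lo <= a -> a < b -> b <= hi -> c a <> c b ->
  exists d e, [/\ a <= d, d < e, e <= b, c d = c a /\ c e = c b &
    forall y, d < y < e -> c y <> c a /\ c y <> c b].
Proof.
(* [e] is the first point of colour [c b] after [a],
   [d] the last point of colour [c a] before [e]. *)
move=> loa ab bhi cab.
set Sb := [set t | lo <= t <= hi /\ c t = c b] `&` [set t | a <= t <= b].
have [[_ ceb] /andP[ae eb]] : Sb (inf Sb).
  apply: closed_inf_mem; [|exact: closed_colour_class_within|by exists a => t [_ /andP[]]].
  by exists b; split=> /=; [split=> // |]; lra.
set e := inf Sb in ceb ae eb.
have ltae : a < e by rewrite lt_neqAle ae andbT; apply/eqP => ea; apply: cab; rewrite ea.
set Sa := [set t | lo <= t <= hi /\ c t = c a] `&` [set t | a <= t <= e].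
have [[_ cda] /andP[ad de]] : Sa (sup Sa).
  apply: closed_sup_mem; [|exact: closed_colour_class_within|by exists e => t [_ /andP[]]].
  by exists a; split=> /=; [split=> // |]; lra.
set d := sup Sa in cda ad de.
have ltde : d < e by rewrite lt_neqAle de andbT; apply/eqP => de'; apply: cab; rewrite -cda de'.
exists d, e; split => // y /andP[dy ye]; split => cy.
- suff : y <= d by rewrite leNgt dy.
  apply: sup_upper_bound; last by split=> /=; [split=> // |]; lra.
  by split; [exists a; split=> /=; [split=> // |]; lra | exists e => t [_ /andP[]]].
- suff : e <= y by rewrite leNgt ye.
  apply: ge_inf; first by exists a => t [_ /andP[]].
  by split=> /=; [split=> // |]; lra.
Qed.

Lemma colour_gap_halves d e (m := (d + e) / 2) : d < e -> c d <> c e ->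
    (forall y, d < y < e -> c y <> c d /\ c y <> c e) ->
  (c d <> c m /\ forall y, d <= y <= m -> c y <> c e) /\
  (c m <> c e /\ forall y, m <= y <= e -> c y <> c d).
Proof.
rewrite /m => de cde gap.
have [cmd cme] : c ((d + e) / 2) <> c d /\ c ((d + e) / 2) <> c e by apply: gap; lra.
split; split=> [|y]; try by [apply/nesym|].
- move=> /andP[]; rewrite le_eqVlt => /predU1P[<- //|dy] ym.
  by apply: (gap y _).2; lra.
- move=> /andP[my]; rewrite le_eqVlt => /predU1P[->|ye]; first exact: nesym.
  by apply: (gap y _).1; lra.
Qed.

Lemma colour_avoiding_subitv n a b : lo <= a -> a < b -> b <= hi -> c a <> c b ->
  exists a' b', [/\ a <= a', a' < b', b' <= b, c a' <> c b' &
    forall y, a' <= y <= b' -> c y <> n].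
Proof.
move=> loa ab bhi cab.
have [[t /andP[a_t t_b] ctn]|no_n] := pselect (exists2 t, a <= t <= b & c t = n); last first.
  by exists a, b; split=> // y yab cyn; apply: no_n; exists y.
have [can|can] := eqVneq (c a) n.
- have [d [e [ad de eb [cda ceb] gap]]] := colour_gap loa ab bhi cab.
  rewrite -cda -ceb in cab gap; have [_ [cme avoid]] := colour_gap_halves de cab gap.
  by exists ((d + e) / 2), e; split=> //; [lra | lra | rewrite -can -cda].
- have ltat : a < t.
    by rewrite lt_neqAle a_t andbT; apply/eqP => eat; move: can; rewrite eat ctn eqxx.
  have cat : c a <> c t by rewrite ctn; exact/eqP.
  have [d [e [ad de et [cda cet] gap]]] := colour_gap loa ltat ltac:(lra) cat.
  rewrite -cda -cet in cat gap; have [[cdm avoid] _] := colour_gap_halves de cat gap.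
  by exists d, ((d + e) / 2); split=> //; [lra | lra | rewrite -ctn -cet].
Qed.

Lemma closed_colouring_cst : lo <= hi -> c lo = c hi.
Proof.
(* Nested intervals with differently coloured endpoints, the (n+1)-st avoiding colour n:
   a common point has no colour.  The implication in [next_spec] makes the choice total. *)
move=> lohi; apply: contrapT => clohi.
pose good (ab : R * R) := [/\ lo <= ab.1, ab.1 < ab.2, ab.2 <= hi & c ab.1 <> c ab.2].
have /choice[next next_spec] : forall nab : nat * (R * R), exists ab', good nab.2 ->
    good ab' /\ [/\ nab.2.1 <= ab'.1, ab'.2 <= nab.2.2 &
                    forall y, ab'.1 <= y <= ab'.2 -> c y <> nab.1].
  move=> [n [a b]]; have [[/= loa ab bhi cab]|] := pselect (good (a, b)); last first.
    by exists (a, b).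
  have [a' [b' [aa' a'b' b'b ca'b' avoid]]] := colour_avoiding_subitv n loa ab bhi cab.
  by exists (a', b') => _; split; split=> //=; lra.
pose u := fix u n := if n is m.+1 then next (m, u m) else (lo, hi).
have good_u n : good (u n).
  elim: n => [|n IH]; last by have [] := next_spec (n, u n) IH.
  split=> //=.
  by rewrite lt_neqAle lohi andbT; apply: contra_not_neq clohi => ->.
have [y y_in] : exists y, forall n, (u n).1 <= y <= (u n).2.
  apply: nested_itv_common_point => n.
  1,2: by have [_ []] := next_spec (n, u n) (good_u n).
  by have [_ /ltW] := good_u n.
have [_ [_ _ avoid]] := next_spec (c y, u (c y)) (good_u (c y)).
exact: avoid (y_in (c y).+1) erefl.
Qed.
End closed_colouring.

Lemma countable_closed_colouring_cst (R : realType) (T : Type) (lo hi : R) (c : R -> T) :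
    countable (c @` [set t | lo <= t <= hi]) ->
    (forall t0, lo <= t0 <= hi -> closed [set t | lo <= t <= hi /\ c t = c t0]) ->
  lo <= hi -> c lo = c hi.
Proof.
move=> /countable_injP[idx idx_inj] closed_c lohi.
have c_in t : lo <= t <= hi -> c t \in c @` [set t | lo <= t <= hi].
  by move=> t_in; rewrite inE; exists t.
suff /idx_inj : idx (c lo) = idx (c hi) by apply; apply: c_in; lra.
apply: (closed_colouring_cst (c := idx \o c)) => // n.
have [[t0 t0_in <-]|no_n] := pselect (exists2 t0, lo <= t0 <= hi & idx (c t0) = n).
- suff -> : [set t | lo <= t <= hi /\ (idx \o c) t = idx (c t0)] =
            [set t | lo <= t <= hi /\ c t = c t0] by exact: closed_c.
  apply/seteqP; split=> t [t_in ct]; split=> //=; last by rewrite ct.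
  exact: idx_inj (c_in _ t_in) (c_in _ t0_in) ct.
- suff -> : [set t | lo <= t <= hi /\ (idx \o c) t = n] = set0 by exact: closed0.
  by apply/seteqP; split=> t // [t_in ct]; apply: no_n; exists t.
Qed.

Lemma within_continuous_cvg {I : Type} {T U : topologicalType} (A : set T) (h : T -> U)
    (F : set_system I) (s : I -> T) (x : T) : Filter F ->
    {within A, continuous h} -> A x -> (\forall i \near F, A (s i)) -> s @ F --> x ->
  h \o s @ F --> h x.
Proof.
move=> FF hc Ax sA sx.
have s_within : s @ F --> within A (nbhs x).
  by move=> B /sx; apply: filterS2 sA => i Asi; apply.
have h_within : h @ within A (nbhs x) --> h x by move: hc => /subspace_continuousP; apply.
exact: cvg_trans (cvg_app h s_within) h_within.
Qed.

Lemma within_continuous_comp_subset {S T U : topologicalType} (A : set S) (B : set T)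
    (p : S -> T) (h : T -> U) :
    {within A, continuous p} -> {within B, continuous h} -> p @` A `<=` B ->
  {within A, continuous (h \o p)}.
Proof.
move=> pc hc pAB; apply/subspace_continuousP => t At.
apply: within_continuous_cvg hc _ _ _; first by apply: pAB; exists t.
- by apply: (filterE (F := nbhs t)) => y Ay; apply: pAB; exists y.
- by move: pc => /subspace_continuousP; apply.
Qed.

Lemma closed_within_preimage {T U : topologicalType} (A : set T) (D : set U) (h : T -> U) :
  closed A -> {within A, continuous h} -> closed D -> closed (A `&` h @^-1` D).
Proof. by move=> cA hc cD; rewrite closed_setSI //; exact: (continuous_closedP _).1 hc D cD. Qed.

Lemma cluster_subseq {R : archiRealFieldType} {T : pseudoMetricType R}
    {s : nat -> T} {x : T} :
  cluster (s @ \oo) x -> exists2 phi : nat -> nat, phi @ \oo --> \oo & s \o phi @ \oo --> x.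
Proof.
move=> clx.
have /choice[phi phi_spec] : forall n, exists j, (n <= j)%N /\ ball x n.+1%:R^-1 (s j).
  move=> n; have [_ [[j nj <-] xj]] :
      [set s j | j in [set j | (n <= j)%N]] `&` ball x n.+1%:R^-1 !=set0.
    apply: clx; first by exists n => // j /= nj; exists j.
    by apply: nbhsx_ballx; rewrite invr_gt0.
  by exists j.
exists phi.
  by move=> P [N _ NP]; exists N => // n /= Nn; apply/NP/(leq_trans Nn); case: (phi_spec n).
apply/cvg_ballP => e e0; apply: filterS (near_infty_natSinv_lt (PosNum e0)) => n ne.
by apply: (le_ball (ltW ne)); exact: (phi_spec n).2.
Qed.

Lemma in_inj_image_eq {T U : Type} {X A B : set T} {h : T -> U} : {in X &, injective h} ->
  A `<=` X -> B `<=` X -> h @` A = h @` B -> A = B.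
Proof.
move=> h_inj; suff sub C D : C `<=` X -> D `<=` X -> h @` C `<=` h @` D -> C `<=` D.
  by move=> AX BX AB; apply/seteqP; split; apply: sub; rewrite // AB.
move=> CX DX CD x Cx; have [y Dy hyx] := CD _ (imageP h Cx).
by rewrite -(h_inj y x) // inE; [exact: DX | exact: CX].
Qed.

Section semiconjugacy.
Variables (R : archiRealFieldType) (M : pseudoMetricType R) (Z : topologicalType).
Variables (f : M -> M) (g : Z -> Z) (F : M -> Z) (X : set M).
Hypotheses (f_inv : forward_invariant f X) (F_cont : {within X, continuous F})
  (F_semiconj : forall x, X x -> F (f x) = g (F x)).

Lemma forward_invariant_iter xi k : X xi -> X (iter k f xi).
Proof. by move=> Xxi; elim: k => //= k IH; apply: f_inv; exists (iter k f xi). Qed.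

Lemma semiconj_iter xi k : X xi -> F (iter k f xi) = iter k g (F xi).
Proof.
by move=> Xxi; elim: k => //= k IH; rewrite F_semiconj ?IH //; exact: forward_invariant_iter.
Qed.

Lemma image_omega_limit_sub xi : X xi ->
  F @` omega_limit f X xi `<=` omega_limit g setT (F xi).
Proof.
move=> Xxi _ [x [Xx [k [k_oo kx]]] <-]; split=> //; exists k; split=> //.
have -> : (fun j => iter (k j) g (F xi)) = F \o (fun j => iter (k j) f xi).
  by apply/funext => j /=; rewrite semiconj_iter.
apply: within_continuous_cvg F_cont Xx _ kx.
by apply: nearW => j; exact: forward_invariant_iter.
Qed.

Lemma omega_limit_sub_image xi : hausdorff_space Z -> X xi -> forward_precompact_in f X xi ->
  omega_limit g setT (F xi) `<=` F @` omega_limit f X xi.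
Proof.
move=> Z_hd Xxi xi_pc z [_ [k [k_oo kz]]].
set s := fun j => iter (k j) f xi.
have Fs_z : F \o s @ \oo --> z.
  suff <- : (fun j => iter (k j) g (F xi)) = F \o s by [].
  by apply/funext => j /=; rewrite semiconj_iter.
have s_in j : (closure (forward_orbit f xi) `&` X) (s j).
  by split; [apply: subset_closure; exists (k j) | exact: forward_invariant_iter].
have [x [[_ Xx] clx]] := xi_pc (s @ \oo) _ (@filterE nat \oo _ _ s_in).
have [phi phi_oo s_phi_x] := cluster_subseq clx.
exists x; first by split=> //; exists (k \o phi); split=> // N; exact: phi_oo (k_oo N).
have Fs_phi_x : F \o (s \o phi) @ \oo --> F x.
  apply: within_continuous_cvg F_cont Xx _ s_phi_x.
  by apply: nearW => j; exact: forward_invariant_iter.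
exact: (@cvg_unique _ Z_hd _ _ _ _ Fs_phi_x (cvg_comp _ _ phi_oo Fs_z)).
Qed.

Hypotheses (Z_hausdorff : hausdorff_space Z) (F_inj : {in X &, injective F})
  (X_precompact : forall xi, X xi -> forward_precompact_in f X xi).

Lemma omega_limit_semiconj xi : X xi -> omega_limit g setT (F xi) = F @` omega_limit f X xi.
Proof.
move=> Xxi; apply/seteqP; split; last exact: image_omega_limit_sub.
exact: omega_limit_sub_image Z_hausdorff Xxi (X_precompact Xxi).
Qed.

Lemma closed_omega_limit_level (T : topologicalType) (A : set T) (p : T -> M) xi :
    closed_basins g -> closed A -> {within A, continuous p} -> p @` A `<=` X -> X xi ->
  closed (A `&` [set t | omega_limit f X (p t) = omega_limit f X xi]).
Proof.
move=> g_basins cA pc pAX Xxi.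
have pX t : A t -> X (p t) by move=> At; apply: pAX; exists t.
suff -> : A `&` [set t | omega_limit f X (p t) = omega_limit f X xi] =
          A `&` (F \o p) @^-1` domain_of_attraction g (omega_limit g setT (F xi)).
  apply: closed_within_preimage => //; exact: within_continuous_comp_subset pc F_cont pAX.
apply/seteqP; split=> t [At]; have Xpt := pX t At.
all: rewrite /domain_of_attraction /= !omega_limit_semiconj //.
  by move=> ->.
by move=> omega_eq; split=> //; apply: (in_inj_image_eq F_inj) omega_eq => ? [].
Qed.

End semiconjugacy.

Theorem corollary22 (R : realType) (M : metricType R) (f : M -> M) (X : set M) :
  separable M ->
  continuous f ->
  forward_invariant f X ->
  path_connected_set R X ->
  (forall xi, X xi -> forward_precompact_in f X xi) ->
  countable (omega_limit_sets f X) ->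
  (exists W1 W2, omega_limit_sets f X W1 /\ omega_limit_sets f X W2 /\ W1 <> W2) ->
  ~ exists (Z : metricType R) (g : Z -> Z) (F : M -> Z),
      separable Z /\ continuous g /\ closed_basins g /\
      {within X, continuous F} /\ {in X &, injective F} /\
      (forall x, X x -> F (f x) = g (F x)).
Proof.
move=> _ _ f_inv X_path X_precompact W_countable [_ [_ [[x1 X1 <-] [[x2 X2 <-] neq]]]].
move=> [Z [g [F [_ [_ [g_basins [F_cont [F_inj F_semiconj]]]]]]]].
have [p [pc p0 p1 pX]] := X_path x1 x2 X1 X2.
have p01 t : 0 <= t <= 1 -> X (p t) by move=> t01; apply: pX; exists t.
apply: neq; rewrite -p0 -p1.
apply: (countable_closed_colouring_cst (c := omega_limit f X \o p)) => //.
- apply: sub_countable W_countable; apply: subset_card_le => _ [t t01 <-].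
  by exists (p t); first exact: p01.
- move=> t0 t01.
  exact (closed_omega_limit_level f_inv F_cont F_semiconj (@metric_hausdorff _ Z) F_inj
    X_precompact g_basins (@itv_closed _ R 0 1) pc pX (p01 _ t01)).
Qed.
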